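(* Assume $\mathcal S\subseteq\mathcal D$. Let $F\in\mathbb R^{d\times s}$, $H=BFC$, $\bar F=F\bar C$, $\bar H=\bar B\bar F$. For $i=1,\dots,s$ let $\phi_i(\bar H)=\bar H_{ii}$ and $\gamma_i(\bar H)=\sum_{j\neq i}|\bar H_{ij}|$. If $\phi_i(\bar H)+\gamma_i(\bar H)<2$ and $\phi_i(\bar H)-\gamma_i(\bar H)>0$ for all $i=1,\dots,s$, then: (i) every trajectory of $\bar e[k+1]=(I_s-\bar H)\bar e[k]$ converges to $0$ exponentially; (ii) the system $e[k+1]=(I_{2n}-H)e[k]$ is stable in the sense of Lyapunov; (iii) for every trajectory of $e[k+1]=(I_{2n}-H)e[k]$ and every $p\in\mathcal S$, the component $e_p[k]$ converges to $0$ exponentially.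
   Context: Standing setup. Let $n\ge 1$ and consider a radial distribution network modeled as a tree with root node $0$ (the substation), non-root nodes $\mathcal N=\{1,\dots,n\}$, and edge set $\mathcal L$; each edge $(i,j)\in\mathcal L$ has resistance $r_{ij}\in\mathbb R$ and reactance $x_{ij}\in\mathbb R$. For a node $i$, $\mathcal L_i$ denotes the set of edges on the unique path from node $0$ to node $i$. Define $R^0,X^0\in\mathbb R^{n\times n}$ by $R^0_{ij}=2\sum_{(w,t)\in\mathcal L_i\cap\mathcal L_j} r_{wt}$ and $X^0_{ij}=2\sum_{(w,t)\in\mathcal L_i\cap\mathcal L_j} x_{wt}$. Let $\mathcal D_1\subseteq\mathcal N$ (nodes with a DER) and $\mathcal S_1\subseteq\mathcal N$ (nodes with a sensor) be nonempty, listed in increasing order; let $\mathcal D_2=\{i+n: i\in\mathcal D_1\}$, $\mathcal S_2=\{i+n:i\in\mathcal S_1\}$, $\mathcal D=\mathcal D_1\cup\mathcal D_2$, $\mathcal S=\mathcal S_1\cup\mathcal S_2$ (subsets of $\{1,\dots,2n\}$, listed in increasing order), $d=|\mathcal D|$, $s=|\mathcal S|$, $\overline{\mathcal D}=\{1,\dots,2n\}\setminus\mathcal D$, $\overline{\mathcal S}=\{1,\dots,2n\}\setminus\mathcal S$. For an increasingly ordered set $\Omega=\{i_1,\dots,i_g\}\subseteq\{1,\dots,c\}$, let $\Gamma_c(\Omega)=[\mathfrak e_{i_1}\ \cdots\ \mathfrak e_{i_g}]\in\mathbb R^{c\times g}$, where $\mathfrak e_\omega$ is the $\omega$-th standard basis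 vector of $\mathbb R^c$. Set $T^d=\Gamma_n(\mathcal D_1)$, $R=R^0T^d$, $X=X^0T^d\in\mathbb R^{n\times d/2}$, $T^s=\Gamma_{2n}(\mathcal S)^\top\in\mathbb R^{s\times 2n}$, and $A=I_{2n}$, $B=\begin{bmatrix}X & R\\ -\tfrac12 R & \tfrac12 X\end{bmatrix}\in\mathbb R^{2n\times d}$, $C=T^s$. The system $\Sigma^1$ is $e[k+1]=Ae[k]+Bu[k]$, $y[k]=Ce[k]$ with state $e[k]\in\mathbb R^{2n}$, input $u[k]\in\mathbb R^d$, output $y[k]\in\mathbb R^s$. Define the permutation matrix $T=[\Gamma_{2n}(\mathcal S\cap\mathcal D),\ \Gamma_{2n}(\mathcal S\cap\overline{\mathcal D}),\ \Gamma_{2n}(\overline{\mathcal S}\cap\mathcal D),\ \Gamma_{2n}(\overline{\mathcal S}\cap\overline{\mathcal D})]\in\mathbb R^{2n\times 2n}$ (each intersection listed in increasing order) and $G=\Gamma_{2n}(\{1,\dots,s\})\in\mathbb R^{2n\times s}$. The reduced system $\Sigma^2$ has $\bar A=I_s$, $\bar B=G^\top T^{-1}B\in\mathbb R^{s\times d}$, $\bar C=CTG\in\mathbb R^{s\times s}$, and reduced state $\bar e=G^\top T^{-1}e\in\mathbb R^s$. *)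

From HB Require Import structures.
From mathcomp Require Import all_boot all_order all_algebra.
From mathcomp Require Import reals.
Set Implicit Arguments. Unset Strict Implicit. Unset Printing Implicit Defensive.
Import Order.TTheory GRing.Theory Num.Theory.
Local Open Scope ring_scope.

(* Nodes of the tree are 'I_n.+1, node 0 (ord0) is the root (substation);
   the non-root node k+1 (1 <= k+1 <= n) corresponds to k : 'I_n via lift ord0.  Each edge is (par t, t) with t non-root;
   it is identified by its child t, and r t, x t are its resistance/reactance. *)
Definition is_rooted_tree n (par : 'I_n.+1 -> 'I_n.+1) : Prop :=
  par ord0 = ord0 /\ forall i : 'I_n.+1, exists k : nat, iter k par i = ord0.

(* the edge with child (node w+1) lies on the path from 0 to node (i+1);
   paths have at most n edges so bounded iteration suffices *)
Definition on_path n (par : 'I_n.+1 -> 'I_n.+1) (w i : 'I_n) : bool :=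
  [exists k : 'I_n.+1, iter k par (lift ord0 i) == lift ord0 w].

Definition R0mx (R : ringType) n (par : 'I_n.+1 -> 'I_n.+1) (r : 'I_n -> R)
  : 'M[R]_n :=
  \matrix_(i, j) (2 * \sum_(w | on_path par w i && on_path par w j) r w).

(* Gamma_c(Omega): columns e_{i_1}, ..., e_{i_g}, Omega listed increasingly *)
Definition Gamma (R : ringType) c (A : {set 'I_c}) : 'M[R]_(c, #|A|) :=
  \matrix_(i, k) (i == enum_val k)%:R.

Definition extD n (A : {set 'I_n}) : {set 'I_(n + n)} :=
  [set lshift n i | i in A] :|: [set rshift n i | i in A].

Definition Bmx (R : realFieldType) n (par : 'I_n.+1 -> 'I_n.+1)
  (r x : 'I_n -> R) (D1 : {set 'I_n}) : 'M[R]_(n + n, #|D1| + #|D1|) :=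
  let Td := Gamma R D1 in
  let Rm := R0mx par r *m Td in
  let Xm := R0mx par x *m Td in
  block_mx Xm Rm (- (2^-1 *: Rm)) (2^-1 *: Xm).

Definition Cmx (R : ringType) n (S1 : {set 'I_n}) : 'M[R]_(#|extD S1|, n + n) :=
  (Gamma R (extD S1))^T.

(* T = [Gamma(S cap D), Gamma(S cap Dbar), Gamma(Sbar cap D), Gamma(Sbar cap Dbar)]:
   column j is e_{cols_j} where cols is the concatenation of the four
   increasingly listed sets *)
Definition Tperm (R : ringType) m (D S : {set 'I_m}) : 'M[R]_m :=
  let cols := enum (S :&: D) ++ enum (S :&: ~: D) ++ enum (~: S :&: D)
              ++ enum (~: S :&: ~: D) in
  \matrix_(i, j) (val i == nth m (map val cols) j)%:R.

Definition Gsel (R : ringType) m s : 'M[R]_(m, s) :=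
  \matrix_(i, k) (val i == val k)%:R.

Definition vnorm (R : realFieldType) m (v : 'cV[R]_m) : R :=
  \big[Num.max/0]_(i < m) `|v i 0|.

Definition exp_conv (R : realFieldType) (y : nat -> R) : Prop :=
  exists c rho : R, 0 <= rho < 1 /\ forall k, `|y k| <= c * rho ^+ k.

Definition lyap_stable (R : realFieldType) m (A : 'M[R]_m) : Prop :=
  forall eps : R, 0 < eps -> exists2 delta : R, 0 < delta &
    forall e : nat -> 'cV[R]_m, (forall k, e k.+1 = A *m e k) ->
      vnorm (e 0%N) < delta -> forall k, vnorm (e k) < eps.

From HB Require Import structures.
From mathcomp Require Import all_boot all_order all_algebra.
From mathcomp Require Import reals.
From mathcomp Require Import ring lra.
Set Implicit Arguments. Unset Strict Implicit. Unset Printing Implicit Defensive.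
Import Order.TTheory GRing.Theory Num.Theory.
Local Open Scope ring_scope.

(* Since T is a permutation matrix containing the columns of Gamma(S) first
   (S is a subset of D), T G = Gamma(S); hence Cbar = 1, Bbar = C B and the
   reduced closed loop is Hbar = C B F.  Strict diagonal dominance of Hbar
   within the band (0, 2) makes I - Hbar a contraction for the max-row-sum
   norm, so the reduced state, which is exactly the sensor output C e of the
   full system, decays geometrically.  The full state moves by -B F (C e) at
   each step, so it stays within a fixed multiple of its initial norm. *)

Definition mxnorm (R : realFieldType) a b (M : 'M[R]_(a, b)) : R :=
  \big[Num.max/0]_(i < a) \sum_(j < b) `|M i j|.

Definition is_trajectory (R : pzRingType) m (A : 'M[R]_m) (e : nat -> 'cV[R]_m) :=
  forall k, e k.+1 = A *m e k.

Section Norms.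

Variable R : realFieldType.

Lemma vnorm_ge0 m (v : 'cV[R]_m) : 0 <= vnorm v.
Proof.
apply: (big_ind (fun x => 0 <= x)) => // a b ha hb.
by rewrite le_max ha.
Qed.

Lemma mxnorm_ge0 a b (M : 'M[R]_(a, b)) : 0 <= mxnorm M.
Proof.
apply: (big_ind (fun x => 0 <= x)) => // [x y hx hy|i _].
  by rewrite le_max hx.
exact: sumr_ge0.
Qed.

Lemma entry_le_vnorm m (v : 'cV[R]_m) i : `|v i 0| <= vnorm v.
Proof. exact: (le_bigmax 0 (fun i => `|v i 0|) i). Qed.

Lemma vnorm_le m (v : 'cV[R]_m) c :
  0 <= c -> (forall i, `|v i 0| <= c) -> vnorm v <= c.
Proof. by move=> c0 h; apply: bigmax_le. Qed.

Lemma vnorm_mulmx a b (M : 'M[R]_(a, b)) v :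
  vnorm (M *m v) <= mxnorm M * vnorm v.
Proof.
apply: vnorm_le; first by rewrite mulr_ge0 ?mxnorm_ge0 ?vnorm_ge0.
move=> i; rewrite mxE; apply: le_trans (ler_norm_sum _ _ _) _.
apply: (@le_trans _ _ (\sum_j `|M i j| * vnorm v)).
  by apply: ler_sum => j _; rewrite normrM ler_wpM2l ?entry_le_vnorm.
rewrite -mulr_suml ler_wpM2r ?vnorm_ge0 //.
exact: (le_bigmax 0 (fun i => \sum_j `|M i j|) i).
Qed.

Lemma vnormB_le m (u w : 'cV[R]_m) : vnorm (u - w) <= vnorm u + vnorm w.
Proof.
apply: vnorm_le; first by rewrite addr_ge0 ?vnorm_ge0.
move=> i; rewrite !mxE; apply: le_trans (ler_normB _ _) _.
by rewrite lerD ?entry_le_vnorm.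
Qed.

Lemma vnorm_trajectory_le m (A : 'M[R]_m) e :
  is_trajectory A e -> forall k, vnorm (e k) <= mxnorm A ^+ k * vnorm (e 0%N).
Proof.
move=> he; elim=> [|k IH]; first by rewrite expr0 mul1r.
rewrite he exprS -mulrA; apply: le_trans (vnorm_mulmx _ _) _.
by rewrite ler_wpM2l ?mxnorm_ge0.
Qed.

Lemma diag_dominant_mxnorm_lt1 s (H : 'M[R]_s) :
  (forall i, H i i + \sum_(j | j != i) `|H i j| < 2) ->
  (forall i, H i i - \sum_(j | j != i) `|H i j| > 0) ->
  mxnorm (1%:M - H) < 1.
Proof.
move=> hlt2 hgt0; apply: bigmax_lt => // i _.
rewrite (bigD1 i) //= !mxE eqxx mulr1n.
rewrite (eq_bigr (fun j => `|H i j|)); last first.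
  by move=> j hj; rewrite !mxE eq_sym (negbTE hj) mulr0n sub0r normrN.
have := hlt2 i; have := hgt0 i.
set g := \sum_(j | _) _; set h := H i i => hg0 hg2.
have : `|1 - h| < 1 - g by rewrite ltr_norml; apply/andP; split; lra.
lra.
Qed.

End Norms.

Section Stability.

Variable R : realFieldType.

Lemma exp_conv_le (y z : nat -> R) :
  (forall k, `|y k| <= `|z k|) -> exp_conv z -> exp_conv y.
Proof.
move=> hyz [c [rho [hrho hz]]]; exists c, rho; split => // k.
exact: le_trans (hyz k) (hz k).
Qed.

Lemma exp_conv_contraction m (A : 'M[R]_m) e :
  mxnorm A < 1 -> is_trajectory A e -> exp_conv (fun k => vnorm (e k)).
Proof.
move=> hA he; exists (vnorm (e 0%N)), (mxnorm A).
split; first by rewrite mxnorm_ge0 hA.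
by move=> k; rewrite ger0_norm ?vnorm_ge0 // mulrC; apply: vnorm_trajectory_le.
Qed.

Lemma lyap_stable_of_uniform_bound m (A : 'M[R]_m) (K : R) : 0 <= K ->
  (forall e, is_trajectory A e -> forall k, vnorm (e k) <= K * vnorm (e 0%N)) ->
  lyap_stable A.
Proof.
move=> K0 hK eps eps0; exists (eps / (K + 1)); first by rewrite divr_gt0 ?ltr_wpDl.
move=> e he; rewrite ltr_pdivlMr ?ltr_wpDl // mulrDr mulr1 mulrC => he0 k.
have := hK e he k; have := vnorm_ge0 (e 0%N); lra.
Qed.

Lemma output_trajectory m s d (B : 'M[R]_(m, d)) (F : 'M[R]_(d, s))
    (C : 'M[R]_(s, m)) e :
  is_trajectory (1%:M - B *m F *m C) e ->
  is_trajectory (1%:M - C *m B *m F) (fun k => C *m e k).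
Proof. by move=> he k; rewrite he !mulmxBl !mul1mx mulmxBr !mulmxA. Qed.

Lemma output_feedback_bounded m s d (B : 'M[R]_(m, d)) (F : 'M[R]_(d, s))
    (C : 'M[R]_(s, m)) :
  mxnorm (1%:M - C *m B *m F) < 1 ->
  exists2 K, 0 <= K & forall e, is_trajectory (1%:M - B *m F *m C) e ->
    forall k, vnorm (e k) <= K * vnorm (e 0%N).
Proof.
set rho := mxnorm _ => hrho; set a := mxnorm (B *m F) * mxnorm C.
have rho0 : 0 <= rho by apply: mxnorm_ge0.
have a0 : 0 <= a by rewrite mulr_ge0 ?mxnorm_ge0.
exists ((1 - rho + a) / (1 - rho)); first by rewrite divr_ge0 //; lra.
move=> e he k; set v0 := vnorm (e 0%N).
have v00 : 0 <= v0 by apply: vnorm_ge0.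
have out_le j : vnorm (C *m e j) <= rho ^+ j * (mxnorm C * v0).
  apply: le_trans (vnorm_trajectory_le (output_trajectory he) j) _.
  by rewrite ler_wpM2l ?exprn_ge0 ?vnorm_mulmx.
have step j : vnorm (e j.+1) <= vnorm (e j) + a * v0 * rho ^+ j.
  rewrite he mulmxBl mul1mx -(mulmxA (B *m F)).
  apply: le_trans (vnormB_le _ _) _; rewrite lerD2l.
  apply: le_trans (vnorm_mulmx _ _) _.
  have := ler_wpM2l (mxnorm_ge0 (B *m F)) (out_le j).
  by rewrite /a mulrA [_ * rho ^+ j]mulrC -!mulrA mulrCA.
(* The increments a v0 rho^j sum to at most a v0 / (1 - rho); the invariant
   below is this geometric bound with the denominator cleared. *)
have inv j : (1 - rho) * vnorm (e j) + a * v0 * rho ^+ j <= (1 - rho + a) * v0.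
  elim: j => [|j IH]; first by rewrite expr0 mulr1 -mulrDl.
  have := step j; have := exprn_ge0 j rho0; rewrite exprS; nra.
have := inv k.
have : 0 <= a * v0 * rho ^+ k by do 2?apply: mulr_ge0; rewrite ?exprn_ge0.
rewrite [_ / _ * _]mulrAC ler_pdivlMr ?subr_gt0 // mulrC; lra.
Qed.

End Stability.

Section SelectionMatrices.

Variable R : comUnitRingType.

Lemma sum_delta m (a : 'I_m) (f : 'I_m -> R) : \sum_i (i == a)%:R * f i = f a.
Proof.
rewrite (bigD1 a) //= eqxx mul1r big1 ?addr0 // => i /negbTE ->.
by rewrite mul0r.
Qed.

Definition Tperm_cols m (D S : {set 'I_m}) :=
  enum (S :&: D) ++ enum (S :&: ~: D) ++ enum (~: S :&: D) ++ enum (~: S :&: ~: D).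

Lemma Tperm_cols_perm m (D S : {set 'I_m}) : perm_eq (Tperm_cols D S) (enum 'I_m).
Proof.
apply/allP => x _ /=.
rewrite !count_cat !count_uniq_mem ?enum_uniq // !mem_enum !inE.
by case: (x \in S); case: (x \in D).
Qed.

Lemma size_Tperm_cols m (D S : {set 'I_m}) : size (Tperm_cols D S) = m.
Proof. by rewrite (perm_size (Tperm_cols_perm D S)) size_enum_ord. Qed.

Lemma uniq_Tperm_cols m (D S : {set 'I_m}) : uniq (Tperm_cols D S).
Proof. by rewrite (perm_uniq (Tperm_cols_perm D S)) enum_uniq. Qed.

Lemma TpermE m (D S : {set 'I_m}) i j :
  Tperm R D S i j = (i == nth j (Tperm_cols D S) j)%:R.
Proof.
by rewrite mxE -/(Tperm_cols D S) (nth_map j) ?size_Tperm_cols ?val_eqE.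
Qed.

Lemma trTperm_mul m (D S : {set 'I_m}) : (Tperm R D S)^T *m Tperm R D S = 1%:M.
Proof.
apply/matrixP => j j'; rewrite mxE [RHS]mxE.
under eq_bigr => i _ do rewrite mxE !TpermE.
rewrite sum_delta (set_nth_default j') ?size_Tperm_cols //.
by rewrite nth_uniq ?size_Tperm_cols ?uniq_Tperm_cols.
Qed.

Lemma invmx_Tperm m (D S : {set 'I_m}) : invmx (Tperm R D S) = (Tperm R D S)^T.
Proof.
have [_ Tu] := mulmx1_unit (trTperm_mul D S).
by rewrite -[RHS]mulmx1 -(mulmxV Tu) mulmxA trTperm_mul mul1mx.
Qed.

Lemma Tperm_Gsel m (D S : {set 'I_m}) :
  S \subset D -> Tperm R D S *m Gsel R m #|S| = Gamma R S.
Proof.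
move=> hSD; have hle : (#|S| <= m)%N by have := max_card (mem S); rewrite card_ord.
apply/matrixP => i k; rewrite !mxE.
rewrite (bigD1 (widen_ord hle k)) //= big1 ?addr0; last first.
  move=> j hj; rewrite [Gsel _ _ _ _ _]mxE.
  suff /negbTE -> : val j != val k by rewrite mulr0.
  by apply: contra hj => /eqP h; apply/eqP/val_inj.
rewrite [Gsel _ _ _ _ _]mxE /= eqxx mulr1 TpermE.
by rewrite /Tperm_cols (setIidPl hSD) nth_cat -cardE /= ltn_ord -enum_val_nth.
Qed.

Lemma trGamma_mul c (A : {set 'I_c}) : (Gamma R A)^T *m Gamma R A = 1%:M.
Proof.
apply/matrixP => k l; rewrite mxE [RHS]mxE.
under eq_bigr => i _ do rewrite !mxE.
by rewrite sum_delta (inj_eq enum_val_inj).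
Qed.

Lemma trGamma_mulE c (A : {set 'I_c}) (v : 'cV[R]_c) k :
  ((Gamma R A)^T *m v) k 0 = v (enum_val k) 0.
Proof.
rewrite mxE; under eq_bigr => i _ do rewrite !mxE.
by rewrite sum_delta.
Qed.

End SelectionMatrices.

Theorem theorem3 (R : realType) (n : nat) (hn : (0 < n)%N)
  (par : 'I_n.+1 -> 'I_n.+1) (htree : is_rooted_tree par)
  (r x : 'I_n -> R) (D1 S1 : {set 'I_n})
  (hD1 : D1 != set0) (hS1 : S1 != set0)
  (hSD : extD S1 \subset extD D1)
  (F : 'M[R]_(#|D1| + #|D1|, #|extD S1|)) :
  let B := Bmx par r x D1 in
  let C := Cmx R S1 in
  let T := Tperm R (extD D1) (extD S1) in
  let G := Gsel R (n + n) #|extD S1| in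
  let H := B *m F *m C in
  let Bbar := G^T *m invmx T *m B in
  let Cbar := C *m T *m G in
  let Fbar := F *m Cbar in
  let Hbar := Bbar *m Fbar in
  (forall i, Hbar i i + \sum_(j | j != i) `|Hbar i j| < 2) ->
  (forall i, Hbar i i - \sum_(j | j != i) `|Hbar i j| > 0) ->
  [/\ forall ebar : nat -> 'cV[R]_#|extD S1|,
        (forall k, ebar k.+1 = (1%:M - Hbar) *m ebar k) ->
        exp_conv (fun k => vnorm (ebar k)),
      lyap_stable (1%:M - H) &
      forall e : nat -> 'cV[R]_(n + n),
        (forall k, e k.+1 = (1%:M - H) *m e k) ->
        forall p, p \in extD S1 -> exp_conv (fun k => e k p 0)].
Proof.
move=> B C T G H Bbar Cbar Fbar Hbar.
have hTG : T *m G = Gamma R (extD S1) by apply: Tperm_Gsel.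
have hBbar : Bbar = C *m B by rewrite /Bbar invmx_Tperm -trmx_mul hTG.
have hCbar : Cbar = 1%:M by rewrite /Cbar -mulmxA hTG trGamma_mul.
have -> : Hbar = C *m B *m F by rewrite /Hbar /Fbar hCbar mulmx1 hBbar.
move=> hlt2 hgt0; have hrho := diag_dominant_mxnorm_lt1 hlt2 hgt0.
split.
- by move=> eb heb; apply: exp_conv_contraction hrho heb.
- have [K K0 hK] := output_feedback_bounded hrho.
  exact: lyap_stable_of_uniform_bound K0 hK.
- move=> e he p hp.
  apply: exp_conv_le (exp_conv_contraction hrho (output_trajectory he)) => k.
  rewrite [X in _ <= X]ger0_norm ?vnorm_ge0 //.
  have := entry_le_vnorm (C *m e k) (enum_rank_in hp p).
  by rewrite trGamma_mulE (enum_rankK_in hp hp).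
Qed.
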